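(* Let $Q=\triangle ABC$ be a triangle with angle $\pi/n$ at $A$ and angle $m\pi/n$ at $B$, where $n$ is even and $m$ is a positive integer with $m<n-1$. Then there is no billiard trajectory in $Q$ starting at $A$ and returning to $A$.
   Context: A billiard trajectory in a polygon is a path of straight segments inside the polygon reflecting off the interiors of edges with angle of incidence equal to angle of reflection; here it emanates from the vertex $A$, and a trajectory returning to $A$ means one whose endpoint is $A$ (trajectories stop when they hit a vertex). *)

From Stdlib Require Import Reals Lra.
Open Scope R_scope.

Definition pt := (R * R)%type.
Definition vadd (p q : pt) : pt := (fst p + fst q, snd p + snd q).
Definition vsub (p q : pt) : pt := (fst p - fst q, snd p - snd q).
Definition vscale (a : R) (p : pt) : pt := (a * fst p, a * snd p).
Definition dot (p q : pt) : R := fst p * fst q + snd p * snd q.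
Definition vnorm (p : pt) : R := sqrt (dot p p).

Definition nondegenerate (A B C : pt) : Prop :=
  (fst B - fst A) * (snd C - snd A) - (snd B - snd A) * (fst C - fst A) <> 0.

Definition angle_at (X Y Z : pt) : R :=
  acos (dot (vsub Y X) (vsub Z X) / (vnorm (vsub Y X) * vnorm (vsub Z X))).

Definition in_open_triangle (A B C P : pt) : Prop :=
  exists a b c : R, 0 < a /\ 0 < b /\ 0 < c /\ a + b + c = 1 /\
    P = vadd (vadd (vscale a A) (vscale b B)) (vscale c C).

Definition in_open_segment (X Y P : pt) : Prop :=
  exists t : R, 0 < t < 1 /\ P = vadd (vscale (1 - t) X) (vscale t Y).

Definition reflect_dir (e d : pt) : pt :=
  vsub (vscale (2 * dot d e / dot e e) e) d.

(* At P, lying in the interior of edge [X,Y], the trajectory arriving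
   from Pprev leaves towards Pnext with angle of incidence equal to angle
   of reflection. *)
Definition reflects_at (X Y Pprev P Pnext : pt) : Prop :=
  in_open_segment X Y P /\
  exists lam : R, 0 < lam /\
    vsub Pnext P = vscale lam (reflect_dir (vsub Y X) (vsub P Pprev)).

(* A billiard trajectory in triangle ABC with k segments, given by its
   points p 0, ..., p k: it starts at A, each segment (open) lies in the
   interior of the triangle, each intermediate point p i (0 < i < k) lies
   in the interior of an edge (so not a vertex: the trajectory has not
   stopped) and the reflection law holds there. *)
Definition billiard_path (A B C : pt) (k : nat) (p : nat -> pt) : Prop :=
  (1 <= k)%nat /\ p 0%nat = A /\
  (forall i : nat, (i < k)%nat ->
     forall P, in_open_segment (p i) (p (S i)) P -> in_open_triangle A B C P) /\
  (forall i : nat, (0 < i)%nat -> (i < k)%nat ->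
     reflects_at A B (p (i - 1)%nat) (p i) (p (S i)) \/
     reflects_at B C (p (i - 1)%nat) (p i) (p (S i)) \/
     reflects_at C A (p (i - 1)%nat) (p i) (p (S i))).

(* Choose an orthonormal frame in which AB, AC and BC have polar angles 0, PI/n
   and PI - m PI/n: every edge makes a multiple of PI/n with the first axis.
   Reflection in a line of angle a maps the angle b to 2a - b, so if the first
   segment leaves A at angle t0 in (0, PI/n), the i-th segment has an angle in
   (-1)^i t0 + (2 PI/n) Z.  The last segment arrives at A at an angle t1 + PI
   with t1 in (0, PI/n); since n is even, PI is a multiple of 2 PI/n, which
   forces k to be odd and t1 = t0, i.e. the path leaves and re-enters A along
   the same ray.  Reflections are reversible and first exits from the open
   triangle are unique, so the path is then a palindrome, p i = p (k - i); for
   k = 2j + 1 its middle segment [p j, p (j+1)] is degenerate, and its midpoint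
   p j would be both on the boundary and in the open triangle. *)

From Stdlib Require Import Reals Lra Lia ZArith.
Open Scope R_scope.

Lemma pt_eq (p q : pt) : fst p = fst q -> snd p = snd q -> p = q.
Proof. destruct p, q; simpl; intros; subst; auto. Qed.

Lemma scale_scale (a b : R) (v : pt) : vscale a (vscale b v) = vscale (a * b) v.
Proof. destruct v; unfold vscale; simpl; f_equal; ring. Qed.

Lemma dot_scale_l (a : R) (u v : pt) : dot (vscale a u) v = a * dot u v.
Proof. destruct u, v; unfold dot, vscale; simpl; ring. Qed.

Lemma dot_scale (a b : R) (u v : pt) : dot (vscale a u) (vscale b v) = a * b * dot u v.
Proof. destruct u, v; unfold dot, vscale; simpl; ring. Qed.

Definition cross (u v : pt) : R := fst u * snd v - snd u * fst v.

Lemma lagrange (u v : pt) : dot u u * dot v v = (dot u v) ^ 2 + (cross u v) ^ 2.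
Proof. destruct u, v; unfold dot, cross; simpl; ring. Qed.

Lemma dot_self_pos (u : pt) : u <> (0, 0) -> 0 < dot u u.
Proof.
  intro Hu. destruct u as [u1 u2]; unfold dot; simpl.
  destruct (Req_dec u1 0), (Req_dec u2 0); subst; try (exfalso; auto; fail); nra.
Qed.

Lemma vnorm_sq (u : pt) : vnorm u * vnorm u = dot u u.
Proof. apply sqrt_sqrt. destruct u; unfold dot; simpl; nra. Qed.

Lemma vnorm_pos (u : pt) : u <> (0, 0) -> 0 < vnorm u.
Proof. intro Hu. apply sqrt_lt_R0, dot_self_pos, Hu. Qed.

Lemma cross_neq0_nonzero (u v : pt) : cross u v <> 0 -> u <> (0, 0) /\ v <> (0, 0).
Proof. intro H. split; intro E; apply H; rewrite E; unfold cross; simpl; ring. Qed.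

Definition orient (X Y P : pt) : R := cross (vsub Y X) (vsub P X).

Lemma nondegenerate_orient (A B C : pt) : nondegenerate A B C <-> orient A B C <> 0.
Proof. reflexivity. Qed.

Lemma orient_cycle (A B C : pt) : orient A B C = orient B C A.
Proof. unfold orient, cross, vsub; simpl; ring. Qed.

Lemma nondegenerate_cycle (A B C : pt) : nondegenerate A B C -> nondegenerate B C A.
Proof. rewrite !nondegenerate_orient, orient_cycle; auto. Qed.

Lemma open_segment_sym (X Y P : pt) : in_open_segment X Y P -> in_open_segment Y X P.
Proof.
  intros (t & Ht & ->). exists (1 - t). split; [lra|].
  destruct X, Y; unfold vadd, vscale; simpl; f_equal; ring.
Qed.

Lemma open_triangle_cycle (A B C P : pt) :
  in_open_triangle A B C P -> in_open_triangle B C A P.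
Proof.
  intros (a & b & c & Ha & Hb & Hc & Hs & ->). exists b, c, a.
  repeat split; try lra. destruct A, B, C; unfold vadd, vscale; simpl; f_equal; ring.
Qed.

(* The signed area [orient X Y] vanishes on the line XY and is affine, so
   along the open segment from Y to Z it is a proper fraction of its value at Z. *)
Lemma orient_on_segment (X Y Z P : pt) : in_open_segment Y Z P ->
  exists t, 0 < t < 1 /\ orient X Y P = t * orient X Y Z.
Proof.
  intros (t & Ht & ->). exists t. split; auto.
  destruct X, Y, Z; unfold orient, cross, vsub, vadd, vscale; simpl; ring.
Qed.

Lemma orient_on_line (X Y P : pt) : in_open_segment X Y P -> orient X Y P = 0.
Proof.
  intro H. destruct (orient_on_segment X Y X P (open_segment_sym _ _ _ H)) as (t & _ & ->).
  unfold orient, cross, vsub; simpl; ring.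
Qed.

Lemma orient_in_triangle (A B C P : pt) : in_open_triangle A B C P ->
  exists c, 0 < c /\ orient A B P = c * orient A B C.
Proof.
  intros (a & b & c & Ha & Hb & Hc & Hs & ->). exists c. split; auto.
  replace a with (1 - b - c) by lra.
  destruct A, B, C; unfold orient, cross, vsub, vadd, vscale; simpl; ring.
Qed.

Lemma vertex_not_interior (A B C : pt) :
  nondegenerate A B C -> ~ in_open_triangle A B C A.
Proof.
  rewrite nondegenerate_orient. intros ND H.
  destruct (orient_in_triangle _ _ _ _ H) as (c & Hc & E).
  apply ND, (Rmult_eq_reg_l c); [|lra].
  rewrite <- E, Rmult_0_r. unfold orient, cross, vsub; simpl; ring.
Qed.

Definition triangle_edge (A B C X Y : pt) : Prop :=
  (X = A /\ Y = B) \/ (X = B /\ Y = C) \/ (X = C /\ Y = A).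

(* Points of the open side AB lie on the line AB, unlike interior points. *)
Lemma side_not_interior (A B C P : pt) :
  nondegenerate A B C -> in_open_segment A B P -> ~ in_open_triangle A B C P.
Proof.
  rewrite nondegenerate_orient. intros ND HS H.
  destruct (orient_in_triangle _ _ _ _ H) as (c & Hc & E).
  rewrite (orient_on_line _ _ _ HS) in E. apply ND, (Rmult_eq_reg_l c); lra.
Qed.

Lemma edge_not_interior (A B C X Y P : pt) : nondegenerate A B C ->
  triangle_edge A B C X Y -> in_open_segment X Y P -> ~ in_open_triangle A B C P.
Proof.
  intros ND [[-> ->]|[[-> ->]|[-> ->]]] HS H.
  - exact (side_not_interior A B C P ND HS H).
  - exact (side_not_interior B C A P (nondegenerate_cycle _ _ _ ND) HS
             (open_triangle_cycle _ _ _ _ H)).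
  - apply (side_not_interior C A B P); auto.
    + do 2 apply nondegenerate_cycle; auto.
    + do 2 apply open_triangle_cycle; auto.
Qed.

(* The open sides AB and BC do not meet: points of BC lie strictly off the line AB. *)
Lemma adjacent_sides_disjoint (A B C P : pt) : nondegenerate A B C ->
  in_open_segment A B P -> in_open_segment B C P -> False.
Proof.
  rewrite nondegenerate_orient. intros ND H1 H2.
  destruct (orient_on_segment A B C P H2) as (t & Ht & E).
  rewrite (orient_on_line _ _ _ H1) in E. apply ND, (Rmult_eq_reg_l t); lra.
Qed.

Lemma edge_unique (A B C X Y X' Y' P : pt) : nondegenerate A B C ->
  triangle_edge A B C X Y -> triangle_edge A B C X' Y' ->
  in_open_segment X Y P -> in_open_segment X' Y' P -> X = X' /\ Y = Y'.
Proof.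
  intros ND E E' H H'.
  pose proof (nondegenerate_cycle _ _ _ ND) as ND1.
  pose proof (nondegenerate_cycle _ _ _ ND1) as ND2.
  destruct E as [[-> ->]|[[-> ->]|[-> ->]]], E' as [[-> ->]|[[-> ->]|[-> ->]]];
    auto; exfalso.
  - exact (adjacent_sides_disjoint A B C P ND H H').
  - exact (adjacent_sides_disjoint C A B P ND2 H' H).
  - exact (adjacent_sides_disjoint A B C P ND H' H).
  - exact (adjacent_sides_disjoint B C A P ND1 H H').
  - exact (adjacent_sides_disjoint C A B P ND2 H H').
  - exact (adjacent_sides_disjoint B C A P ND1 H' H).
Qed.
Lemma cos_eq_1_period (x : R) : cos x = 1 -> exists k : Z, x = IZR k * (2 * PI).
Proof.
  intro H.
  assert (Hs : sin (x / 2) = 0).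
  { assert (E : cos (2 * (x / 2)) = 1 - 2 * sin (x / 2) * sin (x / 2)) by apply cos_2a_sin.
    replace (2 * (x / 2)) with x in E by field. nra. }
  destruct (sin_eq_0_0 _ Hs) as [k Hk]. exists k. lra.
Qed.

Definition unit_dir (e f : pt) (t : R) : pt := vadd (vscale (cos t) e) (vscale (sin t) f).

Lemma unit_dir_opp (e f : pt) (r t : R) :
  vscale (- r) (unit_dir e f t) = vscale r (unit_dir e f (t + PI)).
Proof.
  destruct e, f; unfold unit_dir, vadd, vscale; simpl.
  rewrite neg_cos, neg_sin. f_equal; ring.
Qed.

Lemma unit_dir_scale (e f : pt) (r t : R) :
  vscale r (unit_dir e f t) = vadd (vscale (r * cos t) e) (vscale (r * sin t) f).
Proof. destruct e, f; unfold unit_dir, vadd, vscale; simpl; f_equal; ring. Qed.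

Section OrthonormalFrame.
Variables e f : pt.
Hypothesis He : dot e e = 1.
Hypothesis Hf : dot f f = 1.
Hypothesis Hef : dot e f = 0.

Lemma dot_unit_dir (a b : R) :
  dot (unit_dir e f a) (unit_dir e f b) = cos a * cos b + sin a * sin b.
Proof.
  replace (dot (unit_dir e f a) (unit_dir e f b)) with
    (cos a * cos b * dot e e + (cos a * sin b + sin a * cos b) * dot e f
     + sin a * sin b * dot f f).
  - rewrite He, Hf, Hef; ring.
  - destruct e, f; unfold unit_dir, dot, vadd, vscale; simpl; ring.
Qed.

Lemma unit_dir_norm (a : R) : dot (unit_dir e f a) (unit_dir e f a) = 1.
Proof. rewrite dot_unit_dir. pose proof (sin2_cos2 a). unfold Rsqr in *. lra. Qed.

Lemma reflect_unit_dir (d c a b : R) : d <> 0 ->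
  reflect_dir (vscale d (unit_dir e f a)) (vscale c (unit_dir e f b))
  = vscale c (unit_dir e f (2 * a - b)).
Proof.
  intro Hd. unfold reflect_dir.
  rewrite !dot_scale, dot_unit_dir, unit_dir_norm.
  unfold unit_dir. rewrite cos_minus, sin_minus, cos_2a_cos, sin_2a.
  destruct e as [e1 e2], f as [f1 f2]. unfold vsub, vadd, vscale; simpl.
  pose proof (sin2_cos2 a). unfold Rsqr in *.
  replace (2 * (c * d * (cos b * cos a + sin b * sin a)) / (d * d * 1)) with
    (2 * c * (cos b * cos a + sin b * sin a) / d) by (field; auto).
  apply pt_eq; simpl; field_simplify; auto;
    replace (sin a ^ 2) with (1 - cos a ^ 2) by nra; ring.
Qed.

Lemma unit_dir_inj (l1 l2 a b : R) : 0 < l1 -> 0 < l2 ->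
  vscale l1 (unit_dir e f a) = vscale l2 (unit_dir e f b) ->
  exists k : Z, a - b = IZR k * (2 * PI).
Proof.
  intros H1 H2 H.
  assert (E1 : dot (vscale l1 (unit_dir e f a)) (vscale l1 (unit_dir e f a))
             = dot (vscale l2 (unit_dir e f b)) (vscale l2 (unit_dir e f b)))
    by (rewrite H; auto).
  rewrite !dot_scale, !unit_dir_norm in E1.
  assert (l1 = l2) by nra. subst l2.
  assert (E2 : dot (vscale l1 (unit_dir e f a)) (unit_dir e f b)
             = dot (vscale l1 (unit_dir e f b)) (unit_dir e f b)) by (rewrite H; auto).
  rewrite !dot_scale_l, unit_dir_norm, dot_unit_dir in E2.
  apply cos_eq_1_period. rewrite cos_minus. nra.
Qed.

End OrthonormalFrame.

Definition rot90 (u : pt) : pt := (- snd u, fst u).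
Definition frame_e (u : pt) : pt := vscale (/ vnorm u) u.
Definition frame_f (s : R) (u : pt) : pt := vscale s (rot90 (frame_e u)).

Section AdaptedFrame.
Variables (u : pt) (s : R).
Hypothesis Hu : u <> (0, 0).
Hypothesis Hs : s = 1 \/ s = -1.

Lemma frame_e_unit : dot (frame_e u) (frame_e u) = 1.
Proof.
  unfold frame_e. rewrite dot_scale, <- vnorm_sq.
  pose proof (vnorm_pos u Hu). field. lra.
Qed.

Lemma frame_orthonormal :
  dot (frame_e u) (frame_e u) = 1 /\ dot (frame_f s u) (frame_f s u) = 1 /\
  dot (frame_e u) (frame_f s u) = 0.
Proof.
  pose proof frame_e_unit as He. unfold frame_f.
  destruct (frame_e u) as [e1 e2]. unfold dot, rot90, vscale in *; simpl in *.
  repeat split; destruct Hs; subst s; nra.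
Qed.

Lemma frame_decomp (z : pt) :
  z = vadd (vscale (dot z (frame_e u)) (frame_e u))
           (vscale (dot z (frame_f s u)) (frame_f s u)).
Proof.
  pose proof frame_e_unit as He. unfold frame_f.
  destruct (frame_e u) as [e1 e2], z as [z1 z2].
  unfold dot, rot90, vadd, vscale in *; simpl in *.
  apply pt_eq; simpl; destruct Hs; subst s.
  all: match goal with |- ?z = _ => transitivity (z * (e1 * e1 + e2 * e2)); [rewrite He; ring | ring] end.
Qed.

Lemma frame_u : u = vscale (vnorm u) (unit_dir (frame_e u) (frame_f s u) 0).
Proof.
  pose proof (vnorm_pos u Hu).
  unfold unit_dir, frame_e. rewrite cos_0, sin_0.
  destruct u, (frame_f s u); unfold vadd, vscale; simpl. apply pt_eq; simpl; field; lra.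
Qed.

Lemma frame_angle (z : pt) (g : R) : z <> (0, 0) -> 0 < s * cross u z -> 0 < g < PI ->
  cos g = dot u z / (vnorm u * vnorm z) ->
  z = vscale (vnorm z) (unit_dir (frame_e u) (frame_f s u) g).
Proof.
  intros Hz Hcr Hg Hcos.
  pose proof (vnorm_pos u Hu) as Nu. pose proof (vnorm_pos z Hz) as Nz.
  assert (Hx : dot z (frame_e u) = vnorm z * cos g).
  { unfold frame_e. rewrite Hcos. destruct u, z; unfold dot, vscale; simpl. field. lra. }
  assert (Hy : dot z (frame_f s u) = s * cross u z / vnorm u).
  { unfold frame_f, frame_e. destruct u, z; unfold dot, cross, rot90, vscale; simpl.
    field. lra. }
  assert (Hy_pos : 0 < dot z (frame_f s u)) by (rewrite Hy; apply Rdiv_lt_0_compat; lra).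
  assert (Hsq : (dot z (frame_e u)) ^ 2 + (dot z (frame_f s u)) ^ 2 = vnorm z ^ 2).
  { rewrite Hx, Hy, Hcos. pose proof (lagrange u z) as L. rewrite <- !vnorm_sq in L.
    transitivity ((dot u z ^ 2 + cross u z ^ 2) / (vnorm u * vnorm u)).
    - destruct Hs; subst s; field; lra.
    - rewrite <- L. field. lra. }
  assert (Hy' : dot z (frame_f s u) = vnorm z * sin g).
  { pose proof (sin_gt_0 g (proj1 Hg) (proj2 Hg)). pose proof (sin2_cos2 g) as SC.
    unfold Rsqr in SC. rewrite Hx in Hsq.
    set (y := dot z (frame_f s u)) in *.
    assert (E : (y - vnorm z * sin g) * (y + vnorm z * sin g) = 0) by nra.
    apply Rmult_integral in E as [E|E]; nra. }
  rewrite (frame_decomp z) at 1. rewrite Hx, Hy', unit_dir_scale. reflexivity.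
Qed.

End AdaptedFrame.

(* By Cauchy-Schwarz the cosine ratio lies in [-1, 1], so acos inverts cos on it. *)
Lemma cos_angle (u v : pt) (g : R) : u <> (0, 0) -> v <> (0, 0) ->
  acos (dot u v / (vnorm u * vnorm v)) = g -> cos g = dot u v / (vnorm u * vnorm v).
Proof.
  intros Hu Hv <-. apply cos_acos.
  pose proof (vnorm_pos u Hu). pose proof (vnorm_pos v Hv).
  pose proof (vnorm_sq u). pose proof (vnorm_sq v). pose proof (lagrange u v).
  assert (HN : 0 < vnorm u * vnorm v) by nra.
  assert (Hd : (dot u v) ^ 2 <= (vnorm u * vnorm v) ^ 2) by nra.
  split; apply (Rmult_le_reg_r (vnorm u * vnorm v)); auto;
    unfold Rdiv; rewrite Rmult_assoc, Rinv_l by lra; nra.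
Qed.

(* The angles at A and B of the triangle lie strictly between 0 and PI;
   the bound on B is where m < n - 1 is used. *)
Lemma angle_bounds (n m : nat) : (1 <= m)%nat -> (m < n - 1)%nat ->
  0 < PI / INR n < PI /\ 0 < PI - INR m * PI / INR n < PI.
Proof.
  intros Hm1 Hm2. pose proof PI_RGT_0.
  assert (HnR : 3 <= INR n) by (replace 3 with (INR 3) by (simpl; ring); apply le_INR; lia).
  assert (HmR : 1 <= INR m) by (replace 1 with (INR 1) by (simpl; ring); apply le_INR; lia).
  assert (Hmn : INR m + 1 < INR n)
    by (rewrite <- S_INR; apply lt_INR; lia).
  assert (Hmul : forall x, x < INR n -> x * PI / INR n < PI).
  { intros x Hx. apply (Rmult_lt_reg_r (INR n)); [lra|].
    unfold Rdiv. rewrite Rmult_assoc, Rinv_l by lra. nra. }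
  assert (0 < INR m * PI / INR n) by (apply Rdiv_lt_0_compat; nra).
  assert (1 * PI / INR n < PI) by (apply Hmul; lra).
  assert (INR m * PI / INR n < PI) by (apply Hmul; lra).
  assert (0 < PI / INR n) by (apply Rdiv_lt_0_compat; lra).
  replace (PI / INR n) with (1 * PI / INR n) by (unfold Rdiv; ring).
  split; split; lra.
Qed.

(* The direction of BC turns by PI - beta from the direction of AB, where beta
   is the interior angle at B. *)
Lemma cos_exterior_angle (A B C : pt) (beta : R) :
  vsub B A <> (0, 0) -> vsub C B <> (0, 0) -> angle_at B C A = beta ->
  cos (PI - beta) = dot (vsub B A) (vsub C B) / (vnorm (vsub B A) * vnorm (vsub C B)).
Proof.
  intros Hu Hz HB.
  set (u := vsub B A) in *. set (z := vsub C B) in *.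
  assert (Hw : vsub A B = vscale (-1) u)
    by (unfold u; destruct A, B; unfold vsub, vscale; simpl; f_equal; ring).
  assert (Hw0 : vsub A B <> (0, 0)).
  { rewrite Hw. intro E. apply Hu. destruct u as [u1 u2].
    unfold vscale in E; simpl in E. injection E as E1 E2. apply pt_eq; simpl; lra. }
  pose proof (cos_angle z (vsub A B) _ Hz Hw0 HB) as K.
  rewrite cos_minus, cos_PI, sin_PI, K.
  assert (E1 : dot z (vsub A B) = - dot u z)
    by (rewrite Hw; destruct u, z; unfold dot, vscale; simpl; ring).
  assert (E2 : vnorm (vsub A B) = vnorm u) by (unfold vnorm; rewrite Hw, dot_scale; f_equal; ring).
  rewrite E1, E2. pose proof (vnorm_pos u Hu). pose proof (vnorm_pos z Hz).
  field. lra.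
Qed.

Lemma triangle_frame (n m : nat) (A B C : pt) :
  (1 <= m)%nat -> (m < n - 1)%nat -> nondegenerate A B C ->
  angle_at A B C = PI / INR n -> angle_at B C A = INR m * PI / INR n ->
  exists e f Lu Lv Lw, dot e e = 1 /\ dot f f = 1 /\ dot e f = 0 /\
    0 < Lu /\ 0 < Lv /\ 0 < Lw /\
    vsub B A = vscale Lu (unit_dir e f 0) /\
    vsub C A = vscale Lv (unit_dir e f (PI / INR n)) /\
    vsub C B = vscale Lw (unit_dir e f (PI - INR m * PI / INR n)).
Proof.
  intros Hm1 Hm2 ND HA HB.
  set (u := vsub B A). set (v := vsub C A). set (z := vsub C B).
  assert (Huv : cross u v <> 0) by exact ND.
  assert (Huz : cross u z = cross u v) by (unfold u, v, z, cross, vsub; simpl; ring).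
  destruct (cross_neq0_nonzero u v Huv) as [Hu Hv].
  destruct (cross_neq0_nonzero u z ltac:(rewrite Huz; auto)) as [_ Hz].
  set (s := if Rlt_dec 0 (cross u v) then 1 else -1).
  assert (Hs : s = 1 \/ s = -1) by (unfold s; destruct Rlt_dec; auto).
  assert (Hsc : 0 < s * cross u v) by (unfold s; destruct Rlt_dec; lra).
  destruct (angle_bounds n m Hm1 Hm2) as [Hg1 Hg2].
  assert (Hc1 : cos (PI / INR n) = dot u v / (vnorm u * vnorm v)) by (apply cos_angle; auto).
  assert (Hc2 : cos (PI - INR m * PI / INR n) = dot u z / (vnorm u * vnorm z))
    by (apply cos_exterior_angle; auto).
  destruct (frame_orthonormal u s Hu Hs) as (O1 & O2 & O3).
  exists (frame_e u), (frame_f s u), (vnorm u), (vnorm v), (vnorm z).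
  repeat split; auto using vnorm_pos.
  - apply frame_u; auto.
  - apply frame_angle; auto.
  - apply frame_angle; auto. rewrite Huz; auto.
Qed.

Lemma polar_upper (x y : R) : 0 < y ->
  exists r t, 0 < r /\ 0 < t < PI /\ r * cos t = x /\ r * sin t = y.
Proof.
  intro Hy.
  set (r := sqrt (x * x + y * y)).
  assert (Hr2 : r * r = x * x + y * y) by (apply sqrt_sqrt; nra).
  assert (Hr : 0 < r) by (apply sqrt_lt_R0; nra).
  assert (Hxr : -1 < x / r < 1).
  { assert (x * x < r * r) by nra.
    split; apply (Rmult_lt_reg_r r); auto; unfold Rdiv; rewrite Rmult_assoc, Rinv_l by lra; nra. }
  set (t := acos (x / r)).
  pose proof (acos_bound (x / r)) as Hb. fold t in Hb.
  assert (Hc : cos t = x / r) by (apply cos_acos; lra).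
  assert (H0 : t <> 0) by (intro E; rewrite E, cos_0 in Hc; lra).
  assert (HP : t <> PI) by (intro E; rewrite E, cos_PI in Hc; lra).
  assert (Hs : 0 < sin t) by (apply sin_gt_0; lra).
  pose proof (sin2_cos2 t) as SC. unfold Rsqr in SC. rewrite Hc in SC.
  exists r, t. repeat split; auto; try lra.
  - rewrite Hc. field. lra.
  - assert (E : (r * sin t) * (r * sin t) = y * y).
    { replace ((r * sin t) * (r * sin t)) with (r * r * (1 - x / r * (x / r))) by nra.
      field_simplify; [|lra]. nra. }
    assert (0 < r * sin t) by nra. nra.
Qed.

Lemma sector_direction (e f : pt) (g Lu Lv b c : R) :
  0 < g < PI -> 0 < Lu -> 0 < Lv -> 0 < b -> 0 < c ->
  exists r t, 0 < r /\ 0 < t < g /\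
    vadd (vscale b (vscale Lu (unit_dir e f 0))) (vscale c (vscale Lv (unit_dir e f g)))
    = vscale r (unit_dir e f t).
Proof.
  intros Hg HLu HLv Hb Hc.
  pose proof (sin_gt_0 g (proj1 Hg) (proj2 Hg)) as Sg.
  destruct (polar_upper (b * Lu + c * Lv * cos g) (c * Lv * sin g)) as (r & t & Hr & Ht & Hx & Hy).
  { apply Rmult_lt_0_compat; auto. apply Rmult_lt_0_compat; auto. }
  exists r, t. repeat split; auto; try lra.
  - destruct (Rlt_or_le t g) as [|Hle]; auto. exfalso.
    assert (K : sin (g - t) * r = sin g * (b * Lu)).
    { rewrite sin_minus.
      replace ((sin g * cos t - cos g * sin t) * r) with (sin g * (r * cos t) - cos g * (r * sin t))
        by ring.
      rewrite Hx, Hy. ring. }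
    assert (K2 : 0 <= sin (t - g)) by (apply sin_ge_0; lra).
    replace (t - g) with (- (g - t)) in K2 by ring. rewrite sin_neg in K2.
    assert (0 < sin g * (b * Lu)) by (apply Rmult_lt_0_compat; nra).
    nra.
  - rewrite (unit_dir_scale e f r t), Hx, Hy. destruct e, f; unfold unit_dir, vadd, vscale; simpl.
    rewrite cos_0, sin_0. f_equal; ring.
Qed.

Lemma segment_into_angle (A B C Z : pt) :
  (forall P, in_open_segment A Z P -> in_open_triangle A B C P) ->
  exists b c, 0 < b /\ 0 < c /\ vsub Z A = vadd (vscale b (vsub B A)) (vscale c (vsub C A)).
Proof.
  intro H.
  destruct (H (vadd (vscale (1 - / 2) A) (vscale (/ 2) Z)))
    as (a & b & c & Ha & Hb & Hc & Hs & E).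
  { exists (/ 2). split; [lra | auto]. }
  exists (2 * b), (2 * c). split; [lra | split; [lra |]].
  replace a with (1 - b - c) in E by lra.
  destruct A as [a1 a2], B as [b1 b2], C as [c1 c2], Z as [z1 z2].
  unfold vadd, vscale, vsub in *; simpl in *. injection E as E1 E2.
  apply pt_eq; simpl; lra.
Qed.

Lemma path_bounce (A B C : pt) (k : nat) (p : nat -> pt) (i : nat) :
  billiard_path A B C k p -> (0 < i)%nat -> (i < k)%nat ->
  exists X Y, triangle_edge A B C X Y /\ reflects_at X Y (p (i - 1)%nat) (p i) (p (S i)).
Proof.
  intros (_ & _ & _ & Hrefl) H0 Hk.
  destruct (Hrefl i H0 Hk) as [R|[R|R]]; do 2 eexists; split; try exact R; unfold triangle_edge.
  - left; auto.
  - right; left; auto.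
  - right; right; auto.
Qed.

Lemma returning_path_on_boundary (A B C : pt) (k : nat) (p : nat -> pt) :
  nondegenerate A B C -> billiard_path A B C k p -> p k = A ->
  forall i, (i <= k)%nat -> ~ in_open_triangle A B C (p i).
Proof.
  intros ND BP Hpk i Hi.
  destruct (Nat.eq_dec i 0) as [->|Hi0].
  { destruct BP as (_ & -> & _). apply vertex_not_interior; auto. }
  destruct (Nat.eq_dec i k) as [->|Hik]. { rewrite Hpk. apply vertex_not_interior; auto. }
  destruct (path_bounce A B C k p i BP ltac:(lia) ltac:(lia)) as (X & Y & E & [HS _]).
  exact (edge_not_interior A B C X Y (p i) ND E HS).
Qed.

Lemma path_segment_reversed (A B C : pt) (k : nat) (p : nat -> pt) (i : nat) :
  billiard_path A B C k p -> (i < k)%nat ->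
  forall P, in_open_segment (p (S i)) (p i) P -> in_open_triangle A B C P.
Proof.
  intros (_ & _ & Hseg & _) Hi P HP. apply (Hseg i Hi), open_segment_sym, HP.
Qed.

Lemma returning_path_end_segments (A B C : pt) (k : nat) (p : nat -> pt) :
  billiard_path A B C k p -> p k = A ->
  (forall P, in_open_segment A (p 1%nat) P -> in_open_triangle A B C P) /\
  (forall P, in_open_segment A (p (k - 1)%nat) P -> in_open_triangle A B C P).
Proof.
  intros BP Hpk. pose proof BP as (Hk & H0 & Hseg & _). split.
  - intros P HP. rewrite <- H0 in HP. apply (Hseg 0%nat); auto; lia.
  - intros P HP. rewrite <- Hpk in HP. replace k with (S (k - 1)) in HP at 1 by lia.
    apply (path_segment_reversed A B C k p (k - 1)); auto. lia.
Qed.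

(* Directions along the path: all edges make angles that are multiples of
   PI/N with the first axis of the frame, so every reflection maps the class
   eps * t0 + (2 PI / N) Z of admissible angles to the class with -eps. *)
Definition edges_at_multiples (e f : pt) (N : R) (A B C : pt) : Prop :=
  forall X Y, triangle_edge A B C X Y ->
    exists d (q : Z), d <> 0 /\ vsub Y X = vscale d (unit_dir e f (PI * IZR q / N)).

Definition dir_class (e f : pt) (N t0 eps : R) (v : pt) : Prop :=
  exists c (z : Z), 0 < c /\ v = vscale c (unit_dir e f (eps * t0 + 2 * PI * IZR z / N)).

(* In the adapted frame AB, BC and CA have angles 0, PI (n - m)/n and PI (n + 1)/n. *)
Lemma triangle_edges_at_multiples (n m : nat) (A B C e f : pt) (Lu Lv Lw : R) :
  (1 <= n)%nat -> 0 < Lu -> 0 < Lv -> 0 < Lw ->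
  vsub B A = vscale Lu (unit_dir e f 0) ->
  vsub C A = vscale Lv (unit_dir e f (PI / INR n)) ->
  vsub C B = vscale Lw (unit_dir e f (PI - INR m * PI / INR n)) ->
  edges_at_multiples e f (INR n) A B C.
Proof.
  intros Hn HLu HLv HLw EAB EAC ECB X Y [[-> ->]|[[-> ->]|[-> ->]]].
  all: assert (HN : INR n <> 0) by (apply not_0_INR; lia).
  - exists Lu, 0%Z. split; [lra|]. rewrite EAB. f_equal; f_equal. simpl. field. auto.
  - exists Lw, (Z.of_nat n - Z.of_nat m)%Z. split; [lra|]. rewrite ECB. f_equal; f_equal.
    rewrite minus_IZR, <- !INR_IZR_INZ. field. auto.
  - exists Lv, (1 + Z.of_nat n)%Z. split; [lra|].
    replace (vsub A C) with (vscale (-1) (vsub C A))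
      by (destruct A, C; unfold vsub, vscale; simpl; f_equal; ring).
    rewrite EAC, scale_scale. replace (-1 * Lv) with (- Lv) by ring.
    rewrite unit_dir_opp. f_equal; f_equal.
    rewrite plus_IZR, <- INR_IZR_INZ. field. auto.
Qed.

Lemma reflection_step (e f : pt) (N t0 eps d lam : R) (q : Z) (v : pt) :
  dot e e = 1 -> dot f f = 1 -> dot e f = 0 -> N <> 0 -> d <> 0 -> 0 < lam ->
  dir_class e f N t0 eps v ->
  dir_class e f N t0 (- eps)
    (vscale lam (reflect_dir (vscale d (unit_dir e f (PI * IZR q / N))) v)).
Proof.
  intros He Hf Hef HN Hd Hl (c & z & Hc & ->).
  rewrite (reflect_unit_dir e f He Hf Hef d c _ _ Hd), scale_scale.
  exists (lam * c), (q - z)%Z. split; [nra|].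
  f_equal. f_equal. rewrite minus_IZR. field. auto.
Qed.

Lemma path_directions (A B C e f : pt) (N t0 r0 : R) (k : nat) (p : nat -> pt) :
  dot e e = 1 -> dot f f = 1 -> dot e f = 0 -> N <> 0 ->
  edges_at_multiples e f N A B C -> billiard_path A B C k p ->
  0 < r0 -> vsub (p 1%nat) (p 0%nat) = vscale r0 (unit_dir e f t0) ->
  forall i, (i < k)%nat -> dir_class e f N t0 ((-1) ^ i) (vsub (p (S i)) (p i)).
Proof.
  intros He Hf Hef HN Hedges BP Hr0 E1.
  induction i as [|i IH]; intro Hi.
  - exists r0, 0%Z. split; auto. rewrite E1. f_equal. f_equal. simpl. field. auto.
  - destruct (path_bounce A B C k p (S i) BP ltac:(lia) Hi) as (X & Y & E & _ & lam & Hl & Ew).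
    destruct (Hedges X Y E) as (d & q & Hd & Ed).
    replace (S i - 1)%nat with i in Ew by lia.
    rewrite Ew, Ed. simpl pow. replace (-1 * (-1) ^ i) with (- (-1) ^ i) by ring.
    apply reflection_step; auto. apply IH. lia.
Qed.

(* For n = 2h even, PI is a multiple of
   2 PI/n; so if a direction t1 + PI (with t1 in (0, PI/n)) lies in the class
   eps * t0 + (2 PI/n) Z (with t0 in (0, PI/n)), then eps = 1 and t1 = t0. *)
Lemma return_angle (h : nat) (t0 t1 eps : R) (z K : Z) : (1 <= h)%nat ->
  0 < t0 < PI / INR (2 * h) -> 0 < t1 < PI / INR (2 * h) -> (eps = 1 \/ eps = -1) ->
  (t1 + PI) - (eps * t0 + 2 * PI * IZR z / INR (2 * h)) = IZR K * (2 * PI) ->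
  eps = 1 /\ t1 = t0.
Proof.
  intros Hh H0 H1 Heps Heq.
  assert (HH : 1 <= INR h) by (replace 1 with (INR 1) by (simpl; ring); apply le_INR; auto).
  assert (HN : INR (2 * h) = 2 * INR h) by (rewrite mult_INR; simpl; ring).
  rewrite HN in *. pose proof PI_RGT_0 as Hpi.
  set (u := 2 * PI / (2 * INR h)).
  assert (Hu : 0 < u) by (unfold u; apply Rdiv_lt_0_compat; lra).
  assert (Hu2 : PI / (2 * INR h) = u / 2) by (unfold u; field; lra).
  rewrite Hu2 in *.
  set (M := (K * 2 * Z.of_nat h - Z.of_nat h + z)%Z).
  assert (E : t1 - eps * t0 = IZR M * u).
  { assert (EM : IZR M * u = IZR K * (2 * PI) - PI + 2 * PI * IZR z / (2 * INR h)).
    { unfold M, u. rewrite plus_IZR, minus_IZR, !mult_IZR, <- INR_IZR_INZ. field. lra. }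
    lra. }
  destruct Heps as [-> | ->].
  - split; auto.
    assert (M = 0)%Z.
    { assert (-1 < IZR M * 2 < 1) by (split; apply (Rmult_lt_reg_r u); auto; nra).
      assert (-1 < M)%Z by (apply lt_IZR; simpl; lra).
      assert (M < 1)%Z by (apply lt_IZR; simpl; lra). lia. }
    rewrite H, Rmult_0_l in E. lra.
  - exfalso.
    assert (0 < IZR M < 1) by (split; apply (Rmult_lt_reg_r u); auto; nra).
    assert (0 < M)%Z by (apply lt_IZR; simpl; lra).
    assert (M < 1)%Z by (apply lt_IZR; simpl; lra). lia.
Qed.

Lemma first_exit_unique (T : pt -> Prop) (Y Z1 Z2 d : pt) (l1 l2 : R) :
  0 < l1 -> 0 < l2 -> vsub Z1 Y = vscale l1 d -> vsub Z2 Y = vscale l2 d ->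
  (forall P, in_open_segment Y Z1 P -> T P) -> (forall P, in_open_segment Y Z2 P -> T P) ->
  ~ T Z1 -> ~ T Z2 -> Z1 = Z2.
Proof.
  intros H1 H2 E1 E2 S1 S2 N1 N2.
  (* the nearer exit point would lie on the open segment to the farther one *)
  assert (Near : forall Za Zb la lb, 0 < la < lb ->
            vsub Za Y = vscale la d -> vsub Zb Y = vscale lb d -> in_open_segment Y Zb Za).
  { intros Za Zb la lb Hab Ea Eb. exists (la / lb). split.
    - split; [apply Rdiv_lt_0_compat; lra|].
      apply (Rmult_lt_reg_r lb); [lra|]. unfold Rdiv; rewrite Rmult_assoc, Rinv_l by lra; lra.
    - destruct Y as [y1 y2], Za as [a1 a2], Zb as [b1 b2], d as [d1 d2].
      unfold vsub, vadd, vscale in *; simpl in *.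
      injection Ea as Ea1 Ea2. injection Eb as Eb1 Eb2.
      apply pt_eq; simpl.
      + replace a1 with (y1 + la * d1) by lra. replace b1 with (y1 + lb * d1) by lra. field. lra.
      + replace a2 with (y2 + la * d2) by lra. replace b2 with (y2 + lb * d2) by lra. field. lra. }
  destruct (Rtotal_order l1 l2) as [Hlt|[<-|Hgt]].
  - exfalso. apply N1, S2, (Near Z1 Z2 l1 l2); auto.
  - destruct Y, Z1, Z2, d. unfold vsub, vscale in *; simpl in *.
    injection E1 as E11 E12. injection E2 as E21 E22. apply pt_eq; simpl; lra.
  - exfalso. apply N2, S1, (Near Z2 Z1 l2 l1); auto.
Qed.

Lemma reflection_reversible (e a Y Z : pt) (mu : R) : e <> (0, 0) -> 0 < mu ->
  vsub a Y = vscale mu (reflect_dir e (vsub Y Z)) ->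
  vsub Z Y = vscale (/ mu) (reflect_dir e (vsub Y a)).
Proof.
  intros He Hmu E. pose proof (dot_self_pos e He) as Hee.
  destruct e as [e1 e2], a as [a1 a2], Y as [y1 y2], Z as [z1 z2].
  unfold reflect_dir, vsub, vscale, dot in *; simpl in *.
  injection E as E1 E2.
  replace a1 with (y1 + mu * (2 * ((y1 - z1) * e1 + (y2 - z2) * e2) / (e1 * e1 + e2 * e2) * e1
                               - (y1 - z1))) by lra.
  replace a2 with (y2 + mu * (2 * ((y1 - z1) * e1 + (y2 - z2) * e2) / (e1 * e1 + e2 * e2) * e2
                               - (y2 - z2))) by lra.
  apply pt_eq; simpl; field; lra.
Qed.

Lemma reversed_bounce (T : pt -> Prop) (X1 X2 Pp Y Z1 Z2 : pt) : vsub X2 X1 <> (0, 0) ->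
  reflects_at X1 X2 Pp Y Z1 -> reflects_at X1 X2 Z2 Y Pp ->
  (forall P, in_open_segment Y Z1 P -> T P) -> (forall P, in_open_segment Y Z2 P -> T P) ->
  ~ T Z1 -> ~ T Z2 -> Z1 = Z2.
Proof.
  intros Hne [_ (l & Hl & E1)] [_ (mu & Hmu & E2)] S1 S2 N1 N2.
  pose proof (reflection_reversible _ _ _ _ _ Hne Hmu E2) as E3.
  apply (first_exit_unique T Y Z1 Z2 (reflect_dir (vsub X2 X1) (vsub Y Pp)) l (/ mu)); auto using Rinv_0_lt_compat.
Qed.

Lemma edge_nonzero (A B C X Y : pt) : nondegenerate A B C ->
  triangle_edge A B C X Y -> vsub Y X <> (0, 0).
Proof.
  rewrite nondegenerate_orient.
  assert (Degen : forall X Y Z, vsub Y X = (0, 0) -> orient X Y Z = 0)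
    by (intros X0 Y0 Z0 Hd; unfold orient; rewrite Hd; unfold cross; simpl; ring).
  intros ND [[-> ->]|[[-> ->]|[-> ->]]] Hz; apply ND.
  - apply Degen, Hz.
  - rewrite orient_cycle. apply Degen, Hz.
  - rewrite orient_cycle, orient_cycle. apply Degen, Hz.
Qed.

(* A returning path whose first and last bounce points agree is a palindrome:
   by the reversibility of reflections and the determinism of first exits,
   p i = p (k - i) for all i <= k. *)
Lemma palindrome (A B C : pt) (k : nat) (p : nat -> pt) :
  nondegenerate A B C -> billiard_path A B C k p -> p k = A ->
  p 1%nat = p (k - 1)%nat ->
  forall i, (i + 1 <= k)%nat -> p i = p (k - i)%nat /\ p (S i) = p (k - S i)%nat.
Proof.
  intros ND BP Hpk H1.
  pose proof (returning_path_on_boundary A B C k p ND BP Hpk) as Hbd.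
  pose proof BP as (_ & H0 & Hseg & _).
  induction i as [|i IH]; intro Hi.
  { rewrite H0, Nat.sub_0_r, Hpk. auto. }
  destruct (IH ltac:(lia)) as [IH1 IH2]. split; [exact IH2|].
  set (Y := p (S i)) in *.
  destruct (path_bounce A B C k p (S i) BP ltac:(lia) ltac:(lia)) as (X1 & X2 & E & R1).
  destruct (path_bounce A B C k p (k - S i)%nat BP ltac:(lia) ltac:(lia))
    as (X1' & X2' & E' & R2).
  replace (S i - 1)%nat with i in R1 by lia.
  replace (k - S i - 1)%nat with (k - S (S i))%nat in R2 by lia.
  replace (S (k - S i)) with (k - i)%nat in R2 by lia.
  rewrite <- IH2, <- IH1 in R2. fold Y in R1.
  destruct (edge_unique A B C X1 X2 X1' X2' Y ND E E' (proj1 R1) (proj1 R2)) as [<- <-].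
  apply (reversed_bounce (in_open_triangle A B C) X1 X2 (p i) Y); auto.
  - exact (edge_nonzero A B C X1 X2 ND E).
  - apply Hseg. lia.
  - replace Y with (p (S (k - S (S i)))) by (rewrite IH2; f_equal; lia).
    apply (path_segment_reversed A B C k); auto. lia.
  - apply Hbd. lia.
  - apply Hbd. lia.
Qed.

Lemma pow_neg1_parity (i : nat) :
  ((-1) ^ i = 1 /\ Nat.Even i) \/ ((-1) ^ i = -1 /\ Nat.Odd i).
Proof.
  destruct (Nat.Even_or_Odd i) as [[j ->]|[j ->]].
  - left. split; [apply pow_1_even | exists j; auto].
  - right. split; [| exists j; auto]. rewrite Nat.add_1_r. apply pow_1_odd.
Qed.

Lemma segment_from_A_angle (A B C e f Z : pt) (g Lu Lv : R) :
  0 < g < PI -> 0 < Lu -> 0 < Lv ->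
  vsub B A = vscale Lu (unit_dir e f 0) -> vsub C A = vscale Lv (unit_dir e f g) ->
  (forall P, in_open_segment A Z P -> in_open_triangle A B C P) ->
  exists r t, 0 < r /\ 0 < t < g /\ vsub Z A = vscale r (unit_dir e f t).
Proof.
  intros Hg HLu HLv EAB EAC HZ.
  destruct (segment_into_angle A B C Z HZ) as (b & c & Hb & Hc & ->).
  rewrite EAB, EAC. apply sector_direction; auto.
Qed.

Lemma return_along_first_ray (A B C e f : pt) (n h : nat) (Lu Lv : R) (k : nat) (p : nat -> pt) :
  dot e e = 1 -> dot f f = 1 -> dot e f = 0 -> n = (2 * h)%nat -> (1 <= h)%nat ->
  0 < PI / INR n < PI -> 0 < Lu -> 0 < Lv ->
  vsub B A = vscale Lu (unit_dir e f 0) -> vsub C A = vscale Lv (unit_dir e f (PI / INR n)) ->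
  edges_at_multiples e f (INR n) A B C ->
  billiard_path A B C k p -> p k = A -> k <> 1%nat ->
  exists r0 r1 t0, 0 < r0 /\ 0 < r1 /\
    vsub (p 1%nat) A = vscale r0 (unit_dir e f t0) /\
    vsub (p (k - 1)%nat) A = vscale r1 (unit_dir e f t0) /\ (-1) ^ (k - 1) = 1.
Proof.
  intros He Hf Hef Hh H1h Hg HLu HLv EAB EAC Hedges BP Hpk Hk1.
  pose proof BP as (Hk & H0 & _ & _).
  destruct (returning_path_end_segments A B C k p BP Hpk) as [First Last].
  assert (HN : INR n <> 0) by (apply not_0_INR; lia).
  destruct (segment_from_A_angle A B C e f (p 1%nat) _ Lu Lv Hg HLu HLv EAB EAC First)
    as (r0 & t0 & Hr0 & Ht0 & F0).
  destruct (segment_from_A_angle A B C e f (p (k - 1)%nat) _ Lu Lv Hg HLu HLv EAB EAC Last)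
    as (r1 & t1 & Hr1 & Ht1 & F1).
  assert (Dir := path_directions A B C e f (INR n) t0 r0 k p He Hf Hef HN Hedges
    BP Hr0 ltac:(rewrite H0; exact F0) (k - 1)%nat ltac:(lia)).
  replace (S (k - 1)) with k in Dir by lia. rewrite Hpk in Dir.
  destruct Dir as (c & z & Hc & Ez).
  assert (Ez' : vsub A (p (k - 1)%nat) = vscale r1 (unit_dir e f (t1 + PI))).
  { rewrite <- unit_dir_opp. replace (- r1) with (-1 * r1) by ring.
    rewrite <- scale_scale, <- F1. destruct A, (p (k - 1)%nat); unfold vsub, vscale; simpl.
    f_equal; ring. }
  rewrite Ez' in Ez.
  destruct (unit_dir_inj e f He Hf Hef _ _ _ _ Hr1 Hc Ez) as [K HK].
  assert (Hsign : (-1) ^ (k - 1) = 1 \/ (-1) ^ (k - 1) = -1)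
    by (destruct (pow_neg1_parity (k - 1)) as [[E _]|[E _]]; auto).
  rewrite Hh in HK, Ht0, Ht1.
  destruct (return_angle h t0 t1 _ z K H1h Ht0 Ht1 Hsign HK) as [Heven ->].
  exists r0, r1, t0. auto.
Qed.

Lemma returning_path_retraces (n m : nat) (A B C : pt) (k : nat) (p : nat -> pt) :
  Nat.Even n -> (1 <= m)%nat -> (m < n - 1)%nat -> nondegenerate A B C ->
  angle_at A B C = PI / INR n -> angle_at B C A = INR m * PI / INR n ->
  billiard_path A B C k p -> p k = A ->
  p 1%nat = p (k - 1)%nat /\ Nat.Odd k.
Proof.
  intros [h Hh] Hm1 Hm2 ND HA HB BP Hpk.
  pose proof BP as (Hk & H0 & _ & _).
  destruct (Nat.eq_dec k 1) as [->|Hk1].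
  { split; [simpl; rewrite Hpk, H0; auto | exists 0%nat; auto]. }
  destruct (triangle_frame n m A B C Hm1 Hm2 ND HA HB)
    as (e & f & Lu & Lv & Lw & He & Hf & Hef & HLu & HLv & HLw & EAB & EAC & ECB).
  destruct (angle_bounds n m Hm1 Hm2) as [Hg _].
  destruct (return_along_first_ray A B C e f n h Lu Lv k p He Hf Hef Hh ltac:(lia) Hg HLu HLv
              EAB EAC (triangle_edges_at_multiples n m A B C e f Lu Lv Lw ltac:(lia)
                         HLu HLv HLw EAB EAC ECB) BP Hpk Hk1)
    as (r0 & r1 & t0 & Hr0 & Hr1 & F0 & F1 & Heven).
  split.
  - apply (first_exit_unique (in_open_triangle A B C) A (p 1%nat) (p (k - 1)%nat)
             (unit_dir e f t0) r0 r1); auto.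
    + apply (returning_path_end_segments A B C k p BP Hpk).
    + apply (returning_path_end_segments A B C k p BP Hpk).
    + apply (returning_path_on_boundary A B C k p ND BP Hpk). lia.
    + apply (returning_path_on_boundary A B C k p ND BP Hpk). lia.
  - destruct (pow_neg1_parity (k - 1)) as [[_ [j Hj]]|[E _]]; [exists j; lia | lra].
Qed.

Theorem mainTheorem8 (n m : nat) (A B C : pt) :
  Nat.Even n -> (1 <= m)%nat -> (m < n - 1)%nat ->
  nondegenerate A B C ->
  angle_at A B C = PI / INR n ->
  angle_at B C A = INR m * PI / INR n ->
  ~ (exists (k : nat) (p : nat -> pt),
       billiard_path A B C k p /\ p k = A).
Proof.
  intros Hev Hm1 Hm2 ND HA HB (k & p & BP & Hpk).
  destruct (returning_path_retraces n m A B C k p Hev Hm1 Hm2 ND HA HB BP Hpk)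
    as [Hends [j Hj]].
  (* k = 2j + 1, so the palindrome makes the middle segment [p j, p (j+1)] degenerate *)
  destruct (palindrome A B C k p ND BP Hpk Hends j ltac:(lia)) as [Hmid _].
  replace (k - j)%nat with (S j) in Hmid by lia.
  (* its midpoint p j would then lie both on the boundary and in the open triangle *)
  apply (returning_path_on_boundary A B C k p ND BP Hpk j); [lia|].
  pose proof BP as (_ & _ & Hseg & _).
  apply (Hseg j ltac:(lia)). rewrite <- Hmid.
  exists (/ 2). split; [lra|]. destruct (p j); unfold vadd, vscale; simpl; f_equal; field.
Qed.
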